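(* Let $F$ be a graph of diameter $2$, $n=|V(F)|$, $t=\delta(F)$ with $t\ge 2$, and let $l>n$ be an integer. Then $\delta_i<\delta_l$ for every $i\in\{l+1,l+2,\dots,l+t-1\}$.
   Context: All graphs are simple, finite, undirected. The $F$-degree of a vertex $v$ in $G$ is the number of subgraphs of $G$ (not necessarily induced) isomorphic to $F$ and containing $v$. $A_{2l-1}$ is the graph with vertex set $\{1,\dots,2l-1\}$ in which distinct $i,j$ are adjacent iff $|i-j|\le l-1$; $F_{2l}$ is obtained from $A_{2l-1}$ by adding a new vertex $2l$ joined exactly to $1,\dots,t$. $z_i$ is the $F$-degree of $i$ in $A_{2l-1}$, $f_i$ the $F$-degree of $i$ in $F_{2l}$, and $\delta_i=f_i-z_i$. *)

From mathcomp Require Import all_boot all_order all_algebra.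
Set Implicit Arguments. Unset Strict Implicit. Unset Printing Implicit Defensive.

Definition simple_graph (T : finType) (e : rel T) : Prop :=
  symmetric e /\ irreflexive e.

Fixpoint within (T : finType) (e : rel T) (k : nat) (u v : T) : bool :=
  match k with
  | 0 => u == v
  | k'.+1 => within e k' u v || [exists w, e u w && within e k' w v]
  end.

(* dist(u,v) <= k  iff  within e k u v.  The diameter is d iff all distances
   are <= d and some distance is > d-1 (i.e. equals d). *)
Definition has_diameter (T : finType) (e : rel T) (d : nat) : Prop :=
  (forall u v : T, within e d u v) /\ (exists u v : T, ~~ within e d.-1 u v).

Definition degree (T : finType) (e : rel T) (v : T) : nat := #|[set w | e v w]|.

Definition is_min_degree (T : finType) (e : rel T) (t : nat) : Prop :=
  (exists v : T, degree e v = t) /\ (forall v : T, t <= degree e v).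

(* A subgraph of G = (T, e) is a pair (W, S) with W a vertex set and S a set of
   edges of G (2-element sets {x,y} with e x y) with both ends in W. *)
Definition is_F_copy (VF : finType) (eF : rel VF) (T : finType) (e : rel T)
    (p : {set T} * {set {set T}}) : bool :=
  let W := p.1 in let S := p.2 in
  [forall s in S, [exists x, [exists y,
      [&& x \in W, y \in W, e x y & s == [set x; y]]]]] &&
  [exists f : {ffun VF -> T},
      [&& injectiveb f, f @: setT == W &
          [forall a, forall b, eF a b == ([set f a; f b] \in S)]]].

Definition Fdeg (VF : finType) (eF : rel VF) (T : finType) (e : rel T) (v : T) : nat :=
  #|[set p | is_F_copy eF e p && (v \in p.1)]|.

(* F-degree of the vertex labelled i (labels 1..N, ordinal i-1) in a graph on 'I_N. *)
Definition Fdeg_lab (VF : finType) (eF : rel VF) (N : nat) (e : rel 'I_N) (i : nat) : nat :=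
  #|[set p | is_F_copy eF e p && [exists v in p.1, val v == i.-1]]|.

(* A_{2l-1}: vertices 1..2l-1 (ordinal k is vertex k+1), i ~ j iff 0<|i-j|<=l-1. *)
Definition A_graph (l : nat) : rel 'I_(l.*2.-1) :=
  fun i j => [&& i != j, (i <= j + (l - 1))%N & (j <= i + (l - 1))%N].

(* F_{2l}: vertices 1..2l (ordinal k is vertex k+1); A_{2l-1} on 1..2l-1 plus
   vertex 2l (ordinal 2l-1) joined exactly to 1..t (ordinals 0..t-1). *)
Definition F_graph (l t : nat) : rel 'I_(l.*2) :=
  fun i j =>
    let top := l.*2.-1 in
    (i != j) &&
    [|| [&& (i < top)%N, (j < top)%N, (i <= j + (l - 1))%N & (j <= i + (l - 1))%N],
        (i == top :> nat) && (j < t)%N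
      | (j == top :> nat) && (i < t)%N].

Definition z_deg (VF : finType) (eF : rel VF) (l i : nat) : nat :=
  @Fdeg_lab VF eF l.*2.-1 (@A_graph l) i.

Definition f_deg (VF : finType) (eF : rel VF) (l t i : nat) : nat :=
  @Fdeg_lab VF eF l.*2 (@F_graph l t) i.

Definition delta_deg (VF : finType) (eF : rel VF) (l t i : nat) : int :=
  (f_deg eF l t i)%:Z - (z_deg eF l i)%:Z.

From mathcomp Require Import all_boot all_order all_algebra perm zify.
Set Implicit Arguments. Unset Strict Implicit. Unset Printing Implicit Defensive.
Import Order.TTheory GRing.Theory Num.Theory.
Local Open Scope ring_scope.

(* Since [z_j] counts the copies of [F] in [F_{2l}] avoiding the vertex [2l],
   [delta_j] counts those through both [2l] and [j].  For [l < i < l + t] the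
   transposition [(i l)] maps [F_{2l}] minus the vertex [l] into [F_{2l}], so it
   turns the copies through [2l] and [i] injectively into copies through [2l] and
   [l].  Some copy is missed: send a vertex [v0] of minimum degree [t] to [2l], its
   neighbours to [1..t], a non-neighbour [u0] to [l] and the remaining vertices
   into [1..l-1] (there is room since [n < l]).  As the diameter is 2, [v0] and [u0]
   have a common neighbour [w0]; sending it to [1], the copy contains the edge
   [{l, 1}], whose preimage [{i, 1}] is not an edge because [i - 1 >= l]. *)

Lemma imset_set2 (T T' : finType) (g : T -> T') x y : g @: [set x; y] = [set g x; g y].
Proof. by rewrite imsetU1 imset_set1. Qed.

Lemma imset_in_inj (T T' : finType) (g : T -> T') (W A B : {set T}) :
  {in W &, injective g} -> A \subset W -> B \subset W -> g @: A = g @: B -> A = B.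
Proof.
move=> ginj AW BW.
have preimE (C : {set T}) : C \subset W -> C = W :&: g @^-1: (g @: C).
  move=> CW; apply/setP => x; rewrite !inE.
  apply/idP/andP => [xC | [xW /imsetP [y yC /ginj gxy]]].
    by rewrite (subsetP CW) ?imset_f.
  by rewrite gxy // (subsetP CW).
by move=> gAB; rewrite (preimE A) // (preimE B) // gAB.
Qed.

Lemma imset_can_in (T T' : finType) (h : T -> T') (k : T' -> T) (W : {set T'}) :
  {in W, cancel k h} -> h @: (k @: W) = W.
Proof.
by move=> hk; rewrite -imset_comp -[RHS]imset_id; apply: eq_in_imset => y /hk.
Qed.

Lemma set2_rel (T : finType) (e : rel T) x y u v :
  symmetric e -> e x y -> [set x; y] = [set u; v] -> e u v.
Proof.
move=> sym exy Exy.
have : u \in [set x; y] by rewrite Exy set21.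
have : v \in [set x; y] by rewrite Exy set22.
have : x \in [set u; v] by rewrite -Exy set21.
have : y \in [set u; v] by rewrite -Exy set22.
rewrite !inE => /orP [] /eqP E1 /orP [] /eqP E2 /orP [] /eqP E3 /orP [] /eqP E4.
all: by subst; rewrite // sym.
Qed.

Section Copies.

Variables (VF : finType) (eF : rel VF).

Definition subgraph_image (T T' : finType) (g : T -> T') (p : {set T} * {set {set T}}) :
  {set T'} * {set {set T'}} := (g @: p.1, [set g @: s | s : {set T} in p.2]).

Lemma subgraph_image_inj (T T' : finType) (h : T -> T') :
  injective h -> injective (subgraph_image h).
Proof.
move=> hinj [W1 S1] [W2 S2] [/= /(imset_inj hinj) -> /(imset_inj (imset_inj hinj)) ->].
by [].
Qed.

Lemma F_copy_edge (T : finType) (e : rel T) p s :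
  is_F_copy eF e p -> s \in p.2 ->
  exists x y, [/\ x \in p.1, y \in p.1, e x y & s = [set x; y]].
Proof.
case/andP => /forallP /(_ s) + _ sS; rewrite sS /=.
by case/existsP => x /existsP [y /and4P [xW yW exy /eqP ->]]; exists x, y.
Qed.

Lemma F_copy_edge_sub (T : finType) (e : rel T) p s :
  is_F_copy eF e p -> s \in p.2 -> s \subset p.1.
Proof.
move=> cp /(F_copy_edge cp) [x [y [xW yW _ ->]]].
by apply/subsetP => z; rewrite !inE => /orP [] /eqP ->.
Qed.

Lemma F_copy_image (T T' : finType) (e : rel T) (e' : rel T') (g : T -> T') p :
  is_F_copy eF e p -> {in p.1 &, injective g} ->
  {in p.1 &, forall x y, e x y -> e' (g x) (g y)} ->
  is_F_copy eF e' (subgraph_image g p).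
Proof.
move=> cp ginj ge; have edge := F_copy_edge cp; have esub := F_copy_edge_sub cp.
case: p cp ginj ge edge esub => W S /andP [_ /existsP [f /and3P [finj /eqP fW /forallP fE]]].
move=> /= ginj ge edge esub; rewrite /= in fW fE; apply/andP; split.
  apply/forall_inP => _ /imsetP [s sS ->].
  have [x [y [xW yW exy ->]]] := edge s sS.
  apply/existsP; exists (g x); apply/existsP; exists (g y).
  by rewrite !imset_f //= ge // imset_set2 eqxx.
have fWa a : f a \in W by rewrite -fW imset_f.
apply/existsP; exists [ffun a => g (f a)]; apply/and3P; split.
- apply/injectiveP => a b; rewrite !ffunE => /ginj gab.
  exact: (injectiveP _ finj) (gab (fWa a) (fWa b)).
- by rewrite /= -fW -imset_comp; apply/eqP/eq_imset => a; rewrite ffunE.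
apply/forallP => a; apply/forallP => b; rewrite !ffunE /= -imset_set2.
rewrite (eqP (forallP (fE a) b)); apply/eqP; apply/idP/idP => [fab | /imsetP [s sS]].
  exact: imset_f.
have fabW : [set f a; f b] \subset W.
  by apply/subsetP => z; rewrite !inE => /orP [] /eqP ->.
by move/(imset_in_inj ginj fabW (esub s sS)) => ->.
Qed.

Definition edge_set (T : finType) (e : rel T) : {set {set T}} :=
  [set s | [exists a, exists b, e a b && (s == [set a; b])]].

Lemma F_copy_self : simple_graph eF -> is_F_copy eF eF (setT, edge_set eF).
Proof.
case=> sym _; apply/andP; split.
  apply/forallP => s; apply/implyP; rewrite inE.
  case/existsP => a /existsP [b /andP [eab /eqP ->]].
  by apply/existsP; exists a; apply/existsP; exists b; rewrite !inE eab eqxx.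
apply/existsP; exists [ffun a => a]; apply/and3P; split.
- by apply/injectiveP => a b; rewrite !ffunE.
- by rewrite /= (eq_imset _ (ffunE _)) imset_id.
apply/forallP => a; apply/forallP => b; rewrite !ffunE /edge_set inE; apply/eqP; apply/idP/idP.
  by move=> eab; apply/existsP; exists a; apply/existsP; exists b; rewrite eab eqxx.
by case/existsP => a' /existsP [b' /andP [e' /eqP /esym]]; apply: set2_rel.
Qed.

Lemma card_F_copies_induced (T T' : finType) (e : rel T) (e' : rel T')
    (h : T -> T') (k : T' -> T) (Q : pred T') (R : {set T} -> bool)
    (R' : {set T'} -> bool) :
  injective h -> (forall x y, e' (h x) (h y) = e x y) ->
  (forall x, Q (h x)) -> {in Q, cancel k h} ->
  (forall W : {set T}, R' (h @: W) = R W) ->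
  #|[set p | is_F_copy eF e p && R p.1]| =
  #|[set p | is_F_copy eF e' p && [forall y in p.1, Q y] && R' p.1]|.
Proof.
move=> hinj he Qh hk RR.
rewrite -(card_imset _ (subgraph_image_inj hinj)); apply: eq_card => p'.
rewrite [in RHS]inE; apply/imsetP/idP => [[p] | /andP [/andP [cp /forall_inP QW] r']].
  rewrite inE => /andP [cp rp] ->.
  rewrite (F_copy_image cp) => [||x y _ _]; last by rewrite he.
  - rewrite /= RR rp andbT; apply/forall_inP => _ /imsetP [x _ ->]; exact: Qh.
  - by move=> x y _ _; apply: hinj.
have hkW : {in p'.1, cancel k h} by move=> y /QW /hk.
have hkS : {in p'.2, forall s : {set T'}, h @: (k @: s) = s}.
  move=> s sS; apply: imset_can_in => y ys.
  exact: hkW (subsetP (F_copy_edge_sub cp sS) y ys).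
exists (subgraph_image k p'); last first.
  case: p' {cp QW r'} hkW hkS => W S /= hkW hkS.
  rewrite /subgraph_image /= imset_can_in //; congr pair.
  by rewrite -imset_comp -[LHS]imset_id; apply: eq_in_imset => s /hkS.
rewrite inE (F_copy_image (e := e') cp) => [||x y xW yW]; first by rewrite /= -RR imset_can_in.
  by move=> x y xW yW kxy; rewrite -(hkW x xW) -(hkW y yW) kxy.
by rewrite -he (hkW x xW) (hkW y yW).
Qed.

End Copies.

Section SwapTwoVertices.

Variables (VF T : finType) (eF : rel VF) (e : rel T).

Definition copies_through (c x : T) :=
  [set p | is_F_copy eF e p && (c \in p.1) && (x \in p.1)].

Lemma mem_imset_tperm (a b : T) (W : {set T}) : (a \in tperm a b @: W) = (b \in W).
Proof. by rewrite -{1}(tpermR a b) mem_imset //; apply: perm_inj. Qed.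

Lemma card_copies_through_tperm_lt (a b c w : T) p0 :
  symmetric e -> a != c -> b != c -> a != w -> b != w -> ~~ e a w ->
  (forall x y, x != b -> y != b -> e x y -> e (tperm a b x) (tperm a b y)) ->
  p0 \in copies_through c b -> a \notin p0.1 -> [set b; w] \in p0.2 ->
  (#|copies_through c a| < #|copies_through c b|)%N.
Proof.
move=> sym ac bc aw bw naw etau p0cb ap0 bwp0.
pose Phi (p : {set T} * {set {set T}}) :=
  if b \in p.1 then p else subgraph_image (tperm a b) p.
have PhiP p : p \in copies_through c a -> Phi p \in copies_through c b.
  rewrite !inE /Phi => /andP [/andP [cp cW] aW]; case: ifP => bW; first by rewrite cp cW bW.
  have nb z : z \in p.1 -> z != b by move=> zp; apply: contraFneq bW => <-.
  rewrite (F_copy_image cp) => [|x y _ _|x y /nb xb /nb yb]; last exact: etau.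
  - by apply/andP; split; apply/imsetP; [exists c | exists a]; rewrite ?tpermL ?tpermD.
  - exact: perm_inj.
have Phi_inj : {in copies_through c a &, injective Phi}.
  move=> p q; rewrite !inE /Phi => /andP [_ ap] /andP [_ aq].
  case: ifP => bp; case: ifP => bq //.
  - by move=> pq; move: ap; rewrite pq /= mem_imset_tperm bq.
  - by move=> pq; move: aq; rewrite -pq /= mem_imset_tperm bp.
  - exact: (subgraph_image_inj (@perm_inj _ (tperm a b))).
rewrite -(card_in_imset Phi_inj); apply: proper_card; apply/properP; split.
  by apply/subsetP => _ /imsetP [p pca ->]; exact: PhiP.
exists p0 => //; apply/imsetP => -[p]; rewrite inE /Phi => /andP [/andP [cp _] ap].
case: ifP => bp p0E; first by rewrite p0E ap in ap0.
move: bwp0; rewrite p0E => /imsetP [s sp bwE].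
have [x [y [xp yp exy sE]]] := F_copy_edge cp sp.
have xyE : [set x; y] = [set a; w].
  rewrite -sE -[s](@imset_can_in _ _ (tperm a b) (tperm a b)) => [|z _]; last exact: tpermK.
  by rewrite -bwE imset_set2 tpermR tpermD.
by move: naw; rewrite (set2_rel sym exy xyE).
Qed.

End SwapTwoVertices.

Section LadderGraph.

Variables (VF : finType) (eF : rel VF) (l t : nat).

Lemma F_graphE (x y : 'I_(l.*2)) : @F_graph l t x y =
  (val x != val y) &&
    [|| [&& (val x < l.*2.-1)%N, (val y < l.*2.-1)%N,
            (val x <= val y + (l - 1))%N & (val y <= val x + (l - 1))%N],
        (val x == l.*2.-1) && (val y < t)%N
      | (val y == l.*2.-1) && (val x < t)%N].
Proof. by rewrite /F_graph -val_eqE. Qed.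

Lemma F_graph_sym : symmetric (@F_graph l t).
Proof. by move=> x y; rewrite !F_graphE; lia. Qed.

Lemma val_tperm (N : nat) (a b x : 'I_N) :
  val (tperm a b x) =
    if val x == val a then val b else if val x == val b then val a else val x.
Proof.
rewrite !val_eqE; case: tpermP => [->|->|/eqP/negPf -> /eqP/negPf ->]; rewrite ?eqxx //.
by case: eqP => [->|].
Qed.

Lemma F_graph_tperm (a b : 'I_(l.*2)) :
  (t < l)%N -> (l <= val a)%N -> (val a < l.*2.-1)%N -> val b = l.-1 ->
  forall x y, x != b -> y != b -> @F_graph l t x y ->
    @F_graph l t (tperm a b x) (tperm a b y).
Proof.
move=> tl la alt vb x y; rewrite -!val_eqE !F_graphE !val_tperm vb.
case: a la alt => a /= _ la alt; case: x => x /= _; case: y => y /= _.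
by case: (x =P a); case: (x =P l.-1); case: (y =P a); case: (y =P l.-1); lia.
Qed.

Lemma exists_in_val_eq (N : nat) (W : {set 'I_N}) (x : 'I_N) (j : nat) :
  val x = j -> [exists v in W, val v == j] = (x \in W).
Proof.
move=> xj; apply/exists_inP/idP => [[v vW /eqP vj] | xW]; last by exists x; rewrite ?xj.
by rewrite (val_inj (etrans xj (esym vj))).
Qed.

Hypothesis l_gt0 : (0 < l)%N.

(* [A_{2l-1}] is the subgraph of [F_{2l}] induced on the vertices other than [2l]. *)
Lemma z_deg_F_copies_avoiding_top (j : nat) :
  z_deg eF l j = #|[set p | is_F_copy eF (@F_graph l t) p &&
     [forall y in p.1, (val y < l.*2.-1)%N] && [exists v in p.1, val v == j.-1]]|.
Proof.
have d0 : (0 < l.*2.-1)%N by lia.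
pose k (y : 'I_(l.*2)) : 'I_(l.*2.-1) := insubd (Ordinal d0) (val y).
pose has_j (N : nat) (W : {set 'I_N}) := [exists v in W, val v == j.-1].
apply: (@card_F_copies_induced VF eF _ _ _ _ (widen_ord (leq_pred _)) k
  (fun y => (val y < l.*2.-1)%N) (@has_j _) (@has_j _)).
- by move=> x y /(congr1 val) /= /val_inj.
- move=> x y; rewrite /A_graph F_graphE -val_eqE /=.
  by have := ltn_ord x; have := ltn_ord y; lia.
- exact: ltn_ord.
- by move=> y yl; apply: val_inj; rewrite /= insubdK.
move=> W; apply/exists_inP/exists_inP => [[_ /imsetP [x xW ->] xj] | [x xW xj]].
  by exists x.
by exists (widen_ord (leq_pred _) x); rewrite ?imset_f.
Qed.

Lemma forall_lt_top (top : 'I_(l.*2)) (W : {set 'I_(l.*2)}) :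
  val top = l.*2.-1 -> [forall y in W, (val y < l.*2.-1)%N] = (top \notin W).
Proof.
move=> vtop; apply/forall_inP/idP => [ltW | topW y yW].
  by apply/negP => /ltW; rewrite vtop ltnn.
have : y != top by apply: contraNneq topW => <-.
by move: (ltn_ord y); rewrite -val_eqE vtop /=; lia.
Qed.

Lemma delta_deg_card_copies_through (j : nat) (top x : 'I_(l.*2)) :
  val top = l.*2.-1 -> val x = j.-1 ->
  delta_deg eF l t j = #|copies_through eF (@F_graph l t) top x|.
Proof.
move=> vtop vx.
rewrite /delta_deg z_deg_F_copies_avoiding_top /f_deg /Fdeg_lab.
set A := [set p | _ && _].
pose B := [set p : {set 'I_(l.*2)} * {set {set 'I_(l.*2)}} | top \in p.1].
rewrite -(cardsID B A) PoszD.
have -> : A :&: B = copies_through eF (@F_graph l t) top x.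
  by apply/setP => p; rewrite !inE (exists_in_val_eq _ vx) -!andbA (andbC (x \in p.1)).
have -> : A :\: B = [set p | is_F_copy eF (@F_graph l t) p &&
    [forall y in p.1, (val y < l.*2.-1)%N] && [exists v in p.1, val v == j.-1]].
  apply/setP => p; rewrite !inE (exists_in_val_eq _ vx) (forall_lt_top _ vtop).
  by rewrite andbCA -andbA.
by rewrite addrK.
Qed.

End LadderGraph.

Section Labelling.

Variables (VF : finType) (eF : rel VF) (l t : nat) (v0 u0 w0 : VF).

Hypotheses (eF_simple : simple_graph eF) (deg_v0 : degree eF v0 = t)
  (card_lt_l : (#|VF| < l)%N) (v0_neq_u0 : v0 != u0) (v0_nadj_u0 : ~~ eF v0 u0)
  (v0_adj_w0 : eF v0 w0) (w0_adj_u0 : eF w0 u0).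

Let N0 := [set a | eF v0 a].

Definition neighbours_first : seq VF := (w0 :: rem w0 (enum N0)) ++ enum (~: N0).

(* [v0] goes to the new vertex [2l], [u0] to [l], and every other vertex to its
   position in [neighbours_first]: the neighbours of [v0] land in [1..t], [w0] on [1]. *)
Definition label (a : VF) : nat :=
  if a == v0 then l.*2.-1 else if a == u0 then l.-1 else index a neighbours_first.

Lemma perm_neighbours_head : perm_eq (enum N0) (w0 :: rem w0 (enum N0)).
Proof. by apply: perm_to_rem; rewrite mem_enum inE. Qed.

Lemma mem_neighbours_first a : a \in neighbours_first.
Proof.
rewrite mem_cat -(perm_mem perm_neighbours_head) !mem_enum.
by case: (a \in N0) (in_setC a N0) => ->.
Qed.

Lemma index_neighbours_first_lt a : (index a neighbours_first < #|VF|)%N.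
Proof.
rewrite -(cardsC N0) cardE cardE (perm_size perm_neighbours_head) -size_cat.
by rewrite index_mem mem_neighbours_first.
Qed.

Lemma index_neighbours_first_adj a :
  eF v0 a -> (index a neighbours_first < t)%N.
Proof.
have aN a' : eF v0 a' -> a' \in w0 :: rem w0 (enum N0).
  by move=> va; rewrite -(perm_mem perm_neighbours_head) mem_enum inE.
move=> /aN va; rewrite index_cat va -deg_v0 /degree cardE.
by rewrite (perm_size perm_neighbours_head) index_mem.
Qed.

Lemma label_lt a : (label a < l.*2)%N.
Proof.
have := index_neighbours_first_lt a; rewrite /label.
by case: ifP => _; [|case: ifP => _]; lia.
Qed.

Definition vertex_label (a : VF) : 'I_(l.*2) := Ordinal (label_lt a).

Lemma vertex_label_inj : injective vertex_label.
Proof.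
move=> a b /(congr1 val); rewrite /= /label.
have := index_neighbours_first_lt a; have := index_neighbours_first_lt b.
have := card_lt_l; repeat case: ifP => [/eqP -> | _] //; try lia.
by move=> _ _ _; apply: (index_inj a); apply: mem_neighbours_first.
Qed.

Lemma label_le a : a != v0 -> (label a <= l.-1)%N.
Proof.
have := index_neighbours_first_lt a; rewrite /label => + /negPf ->.
by case: ifP => _; lia.
Qed.

Lemma label_adj a : eF v0 a -> (label a < t)%N.
Proof.
have [_ irr] := eF_simple.
move=> va; have [av au] : a != v0 /\ a != u0.
  by split; apply: contraTneq va => ->; rewrite ?irr ?(negPf v0_nadj_u0).
by rewrite /label (negPf av) (negPf au); apply: index_neighbours_first_adj.
Qed.

Lemma vertex_label_edge x y :
  eF x y -> @F_graph l t (vertex_label x) (vertex_label y).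
Proof.
have [sym irr] := eF_simple.
move=> exy; have xy : x != y by apply: contraTneq exy => ->; rewrite irr.
rewrite F_graphE /= -(inj_eq vertex_label_inj) -val_eqE /= in xy *.
rewrite xy /=; have := label_lt x; have := label_lt y.
have lv0 : label v0 = l.*2.-1 by rewrite /label eqxx.
case: (eqVneq x v0) => [xv | xv]; first by subst x; have := label_adj exy; rewrite lv0; lia.
case: (eqVneq y v0) => [yv | yv].
  by subst y; rewrite sym in exy; have := label_adj exy; rewrite lv0; lia.
by have := label_le xv; have := label_le yv; lia.
Qed.

Lemma label_w0 : label w0 = 0%N.
Proof.
have [_ irr] := eF_simple.
have w0v0 : w0 != v0 by apply: contraTneq v0_adj_w0 => ->; rewrite irr.
have w0u0 : w0 != u0 by apply: contraTneq v0_adj_w0 => ->; rewrite (negPf v0_nadj_u0).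
by rewrite /label (negPf w0v0) (negPf w0u0) /neighbours_first /= eqxx.
Qed.

Lemma exists_copy_through_top_l_without_i (top lv iv : 'I_(l.*2)) :
  val top = l.*2.-1 -> val lv = l.-1 -> (l <= val iv)%N -> (val iv < l.*2.-1)%N ->
  exists p0 w, [/\ p0 \in copies_through eF (@F_graph l t) top lv, iv \notin p0.1,
                   [set lv; w] \in p0.2 & val w = 0%N].
Proof.
have [sym _] := eF_simple.
move=> vtop vlv liv ivlt.
have lbl_top : vertex_label v0 = top by apply: val_inj; rewrite vtop /= /label eqxx.
have lbl_lv : vertex_label u0 = lv.
  by apply: val_inj; rewrite vlv /= /label eq_sym (negPf v0_neq_u0) eqxx.
exists (subgraph_image vertex_label (setT, edge_set eF)), (vertex_label w0); split => //=.
- rewrite inE (F_copy_image (F_copy_self eF_simple)) => [|x y _ _|x y _ _].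
  + by rewrite /= -lbl_top -lbl_lv !imset_f.
  + exact: vertex_label_inj.
  + exact: vertex_label_edge.
- apply/imsetP => -[a _ iva]; have {iva} : val iv = label a by rewrite iva.
  case: (eqVneq a v0) => [-> | /label_le]; last by lia.
  by rewrite /label eqxx; lia.
- rewrite -lbl_lv -imset_set2 imset_f // inE.
  by apply/existsP; exists u0; apply/existsP; exists w0; rewrite sym w0_adj_u0 eqxx.
- exact: label_w0.
Qed.

End Labelling.

Section Diameter.

Variables (T : finType) (e : rel T).

Lemma within1E u v : within e 1 u v = (u == v) || e u v.
Proof.
rewrite /=; congr (_ || _); apply/existsP/idP => [[w /andP [euw /eqP <-]] // | euv].
by exists v; rewrite euv eqxx.
Qed.

Lemma within2_common_neighbour u v :
  within e 2 u v -> ~~ within e 1 u v -> exists2 w, e u w & e w v.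
Proof.
move=> /orP [near | /existsP [w /andP [euw]]]; first by move/negP => /(_ near).
move=> /orP [/eqP wv | /existsP [x /andP [ewx /eqP <-]]] far; last by exists w.
by move: far; rewrite within1E -wv euw orbT.
Qed.

(* A vertex adjacent to all others has degree [#|T| - 1], more than the endpoints
   of a non-edge can have. *)
Lemma min_degree_non_neighbour v0 :
  simple_graph e -> (forall v, degree e v0 <= degree e v)%N ->
  (exists u v, ~~ within e 1 u v) -> exists2 u, v0 != u & ~~ e v0 u.
Proof.
move=> [_ irr] min_deg [a [b]]; rewrite within1E negb_or => /andP [ab nab].
case: (pickP [pred u | (v0 != u) && ~~ e v0 u]) => [u /andP [] | adj]; first by exists u.
have deg_v0 : degree e v0 = #|[set~ a]|.
  rewrite cardsC1 /degree -(cardsC1 v0); apply: eq_card => w; rewrite !inE.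
  by have := adj w; rewrite /= eq_sym; case: eqP => [-> | _] /=; [rewrite irr | case: e].
have deg_a : (degree e a < #|[set~ a]|)%N.
  rewrite (cardsD1 b) !inE eq_sym ab add1n ltnS.
  apply/subset_leq_card/subsetP => w; rewrite !inE => eaw.
  by rewrite (contraTneq _ eaw) ?(contraTneq _ eaw) // => ->; rewrite ?irr ?(negPf nab).
by have := min_deg a; rewrite deg_v0 leqNgt deg_a.
Qed.

End Diameter.

Theorem lemma11 (VF : finType) (eF : rel VF) (t l : nat)
  (hF : simple_graph eF)
  (hdiam : has_diameter eF 2)
  (ht : is_min_degree eF t)
  (ht2 : (2 <= t)%N)
  (hl : (#|VF| < l)%N) :
  forall i : nat, (l.+1 <= i)%N -> (i <= l + t - 1)%N ->
    delta_deg eF l t i < delta_deg eF l t l.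
Proof.
move=> i li ui.
have [[v0 deg_v0] min_deg] := ht.
have [u0 v0u0 v0_nadj_u0] : exists2 u0, v0 != u0 & ~~ eF v0 u0.
  by apply: min_degree_non_neighbour hdiam.2 => //; rewrite deg_v0.
have far : ~~ within eF 1 v0 u0 by rewrite within1E negb_or v0u0.
have [w0 v0w0 w0u0] := within2_common_neighbour (hdiam.1 v0 u0) far.
have tl : (t < l)%N by rewrite -deg_v0 (leq_ltn_trans (max_card _) hl).
have l_gt0 : (0 < l)%N by lia.
pose top := @Ordinal l.*2 l.*2.-1 ltac:(lia).
pose lv := @Ordinal l.*2 l.-1 ltac:(lia).
pose iv := @Ordinal l.*2 i.-1 ltac:(lia).
have [l_iv iv_lt] : (l <= val iv)%N /\ (val iv < l.*2.-1)%N by split=> /=; lia.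
have [p0 [w [p0_top_lv iv_p0 lvw_p0 w0_val]]] :=
  exists_copy_through_top_l_without_i hF deg_v0 hl v0u0 v0_nadj_u0 v0w0 w0u0
    (erefl : val top = _) (erefl : val lv = _) l_iv iv_lt.
rewrite (delta_deg_card_copies_through _ _ l_gt0 (erefl : val top = _) (erefl : val iv = _)).
rewrite (delta_deg_card_copies_through _ _ l_gt0 (erefl : val top = _) (erefl : val lv = _)).
rewrite ltz_nat; apply: (card_copies_through_tperm_lt _ _ _ _ _ _ _ p0_top_lv iv_p0 lvw_p0).
- exact: F_graph_sym.
- 1-4: by rewrite -val_eqE /= ?w0_val; lia.
- by rewrite F_graphE /= w0_val; lia.
- by apply: F_graph_tperm => /=; lia.
Qed.
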